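(* There exist absolute positive constants $c,C$ such that the following holds. Let $W$ be a non-negative integer-valued random variable with $EW=\lambda\in(0,\infty)$, and let $W^s$ be defined on the same probability space as $W$ with the $W$-size biased distribution. Set $\Delta=W+1-W^s$ and assume $\Delta\in\{-1,0,1\}$ almost surely and that there are non-negative constants $\delta_1,\delta_2$ with $$P(\Delta=-1\mid W)\le\delta_1,\qquad P(\Delta=1\mid W)\le \delta_2 W\quad\text{almost surely}.$$ Let $Y\sim\mathrm{Poi}(\lambda)$. Then for every integer $k\ge\lambda$ such that, with $\xi=(k-\lambda)/\sqrt\lambda$, $(\delta_1+\delta_2\lambda)(1+\xi^2)\le c$, we have $$\Big|\frac{P(W\ge k)}{P(Y\ge k)}-1\Big|\le C(\delta_1+\delta_2\lambda)(1+\xi^2).$$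
   Context: For a non-negative random variable $W$ with $EW=\lambda>0$, a random variable $W^s$ has the $W$-size biased distribution if $E[Wf(W)]=\lambda E[f(W^s)]$ for all functions $f$ for which the expectations exist. $\mathrm{Poi}(\lambda)$ is the Poisson distribution with mean $\lambda$. *)

From Stdlib Require Import Reals Arith Factorial.
Open Scope R_scope.

Fixpoint psum (f : nat -> R) (k : nat) : R :=
  match k with
  | O => 0
  | S k' => psum f k' + f k'
  end.

Definition poi_pmf (lam : R) (j : nat) : R :=
  exp (- lam) * lam ^ j / INR (fact j).

Definition poi_tail (lam : R) (k : nat) : R :=
  1 - psum (poi_pmf lam) k.

(* For a probability mass function p on nat (total mass 1), P(X >= k). *)
Definition pmf_tail (p : nat -> R) (k : nat) : R :=
  1 - psum p k.

Definition abs_summable (u : nat -> R) : Prop :=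
  exists l, infinite_sum (fun n => Rabs (u n)) l.

(* Size-bias relation between the law pW of W (mean lam) and the law pWs
   of W^s:  E[W f(W)] = lam E[f(W^s)] for all f for which both
   expectations exist. *)
Definition size_biased (pW pWs : nat -> R) (lam : R) : Prop :=
  forall f : nat -> R,
    abs_summable (fun n => INR n * f n * pW n) ->
    abs_summable (fun n => f n * pWs n) ->
    forall a b,
      infinite_sum (fun n => INR n * f n * pW n) a ->
      infinite_sum (fun n => f n * pWs n) b ->
      a = lam * b.

From Stdlib Require Import Reals Lra Lia Arith Factorial.
Open Scope R_scope.

(* Write q for the law of W, pi for the Poisson(lam) law, Pi j = P(Y >= j),
   eps = d1 + d2 lam and u = eps (1 + xi^2).  The coupling yields a perturbed
   Poisson recursion (m+1) q(m+1) = lam (q m + g(m+1) - g m), where the defect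
   g n = P(W = n, Delta = 1) - P(W = n - 1, Delta = -1) satisfies
   |g n| <= d2 n q n + d1 q(n-1) (Section Coupling).  For g = 0 the ratio
   h = q / pi would be constant; all estimates measure its variation.

   1. Summing the recursion against the Poisson tail ratios Pi(N+1)/pi(N)
      gives P(W >= k) = q k + (tail ratio) (q k - g k) up to a relative error
      eps for k >= lam (right_tail_estimate); summing against the head ratios
      P(Y <= n)/pi(n) expresses P(W <= n) through q n and g (head_identity).
   2. With j < lam <= j + 1 and M the maximum of h on [j - 1, k], h moves by
      O(eps M) near the mean, and h - g/pi moves by eps M (k - lam)/lam per
      step beyond it, so h is flat up to O(u M) on [j + 1, k] (ratio_flat).
   3. Total mass 1 forces h j = 1 + O(eps M + eps) (ratio_at_mean); hence
      M <= 2 and h k = 1 + O(u).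
   4. The right-tail estimate at k turns h k ~ 1 into P(W >= k) / Pi k ~ 1. *)

Lemma Rdiv_nonneg a b : 0 <= a -> 0 < b -> 0 <= a / b.
Proof. intros. apply Rmult_le_pos; [assumption | left; apply Rinv_0_lt_compat; assumption]. Qed.

Lemma Rabs_le_inv x a : Rabs x <= a -> -a <= x <= a.
Proof. unfold Rabs. destruct (Rcase_abs x); lra. Qed.

Lemma Rabs_sub_le a b : Rabs (a - b) <= Rabs a + Rabs b.
Proof. unfold Rminus. rewrite <- (Rabs_Ropp b). apply Rabs_triang. Qed.

Lemma Rabs_div_le x c B : 0 < c -> Rabs x <= B * c -> Rabs (x / c) <= B.
Proof.
  intros Hc H. unfold Rdiv. rewrite Rabs_mult, (Rabs_right (/ c))
    by (left; apply Rinv_0_lt_compat; lra).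
  apply Rmult_le_reg_r with c; [lra|]. rewrite Rmult_assoc, Rinv_l; lra.
Qed.

Lemma ratio_by_deviation x lam : 0 < lam -> lam <= x -> 1 <= x ->
  x / lam <= 2 * (1 + (x - lam) ^ 2 / lam).
Proof.
  intros Hl Hx H1.
  replace (x / lam) with (1 + (x - lam) / lam) by (field; lra).
  assert (0 <= (x - lam) ^ 2 / lam) by (apply Rdiv_nonneg; [nra | lra]).
  destruct (Rle_dec (1 / 2) (x - lam)).
  - assert ((x - lam) / lam <= 2 * ((x - lam) ^ 2 / lam)).
    { unfold Rdiv. rewrite <- Rmult_assoc.
      apply Rmult_le_compat_r; [left; apply Rinv_0_lt_compat|]; nra. }
    lra.
  - assert ((x - lam) / lam <= 1).
    { apply Rmult_le_reg_r with lam; [lra|].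
      unfold Rdiv. rewrite Rmult_assoc, Rinv_l; lra. }
    lra.
Qed.

Lemma sq_div_sqrt x lam : 0 < lam -> (x / sqrt lam) ^ 2 = x ^ 2 / lam.
Proof. intros H. unfold Rdiv. rewrite Rpow_mult_distr, pow_inv, pow2_sqrt by lra. reflexivity. Qed.

Lemma nat_ceiling x : 0 < x -> exists j, INR j < x <= INR (S j).
Proof.
  intros Hx. destruct (INR_unbounded x) as [n Hn].
  assert (Hxn : x <= INR n) by lra. clear Hn.
  induction n as [|n IH]; [simpl in Hxn; lra|].
  destruct (Rle_dec x (INR n)) as [Hle|Hgt]; [exact (IH Hle)|].
  exists n. split; lra.
Qed.

Lemma finite_argmax (f : nat -> R) lo n :
  exists i, (lo <= i <= lo + n)%nat /\ forall i', (lo <= i' <= lo + n)%nat -> f i' <= f i.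
Proof.
  induction n as [|n [i [Hi Hmax]]].
  - exists lo. split; [lia|]. intros i' Hi'. replace i' with lo by lia. lra.
  - destruct (Rle_dec (f i) (f (lo + S n)%nat)).
    + exists (lo + S n)%nat. split; [lia|]. intros i' Hi'.
      destruct (Nat.eq_dec i' (lo + S n)) as [->|]; [lra|].
      apply Rle_trans with (f i); [apply Hmax; lia | assumption].
    + exists i. split; [lia|]. intros i' Hi'.
      destruct (Nat.eq_dec i' (lo + S n)) as [->|]; [lra | apply Hmax; lia].
Qed.

Lemma psum_S f n : psum f (S n) = psum f n + f n.
Proof. reflexivity. Qed.

Lemma sum_f_R0_psum f n : sum_f_R0 f n = psum f (S n).
Proof. induction n; simpl in *; [lra | rewrite IHn; reflexivity]. Qed.

Lemma psum_zero f n : (forall i, (i < n)%nat -> f i = 0) -> psum f n = 0.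
Proof.
  induction n; intros H; simpl; [reflexivity|].
  rewrite IHn by (intros; apply H; lia). rewrite H by lia. ring.
Qed.

Lemma psum_plus f g n : psum (fun i => f i + g i) n = psum f n + psum g n.
Proof. induction n; simpl; lra. Qed.

Lemma psum_scal c f n : psum (fun i => c * f i) n = c * psum f n.
Proof. induction n; simpl; [ring | rewrite IHn; ring]. Qed.

Lemma psum_shift f n : psum (fun m => f (pred m)) (S n) = f 0%nat + psum f n.
Proof. induction n; simpl in *; [ring | rewrite IHn; ring]. Qed.

Lemma psum_nonneg f n : (forall i, 0 <= f i) -> 0 <= psum f n.
Proof. intros H; induction n; simpl; [lra | specialize (H n); lra]. Qed.

Lemma psum_mono f m n : (forall i, 0 <= f i) -> (m <= n)%nat -> psum f m <= psum f n.
Proof. intros H Hmn; induction Hmn; simpl; [lra | specialize (H m0); lra]. Qed.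

Lemma psum_le f g n : (forall i, (i < n)%nat -> f i <= g i) -> psum f n <= psum g n.
Proof.
  induction n; intros H; simpl; [lra|].
  assert (psum f n <= psum g n) by (apply IHn; intros; apply H; lia).
  specialize (H n ltac:(lia)); lra.
Qed.

Lemma psum_abs f n : Rabs (psum f n) <= psum (fun i => Rabs (f i)) n.
Proof.
  induction n; simpl; [rewrite Rabs_R0; lra|].
  eapply Rle_trans; [apply Rabs_triang | lra].
Qed.

Lemma psum_window_le f g a b : (a <= b)%nat ->
  (forall i, (a <= i < b)%nat -> f i <= g i) ->
  psum f b - psum f a <= psum g b - psum g a.
Proof.
  intros Hab H. induction Hab; [lra|]. rewrite !psum_S.
  assert (f m <= g m) by (apply H; lia).
  assert (psum f m - psum f a <= psum g m - psum g a) by (apply IHHab; intros; apply H; lia).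
  lra.
Qed.

Lemma psum_window_abs f g a b : (a <= b)%nat ->
  (forall i, (a <= i < b)%nat -> Rabs (f i) <= g i) ->
  Rabs (psum f b - psum f a) <= psum g b - psum g a.
Proof.
  intros Hab H. induction Hab.
  - unfold Rminus. rewrite Rplus_opp_r, Rabs_R0. lra.
  - rewrite !psum_S. assert (Rabs (f m) <= g m) by (apply H; lia).
    assert (Rabs (psum f m - psum f a) <= psum g m - psum g a)
      by (apply IHHab; intros; apply H; lia).
    replace (psum f m + f m - psum f a) with ((psum f m - psum f a) + f m) by ring.
    eapply Rle_trans; [apply Rabs_triang | lra].
Qed.

Lemma CV_const c : Un_cv (fun _ => c) c.
Proof. intros eps He. exists O. intros. unfold Rdist. rewrite Rminus_diag, Rabs_R0. lra. Qed.

Lemma infinite_sum_ext f g l : (forall n, f n = g n) -> infinite_sum g l -> infinite_sum f l.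
Proof.
  intros Hfg H eps He. destruct (H eps He) as [N HN]. exists N. intros n Hn.
  rewrite (sum_eq f g) by (intros; apply Hfg). apply HN. assumption.
Qed.

Lemma series_psum f l : infinite_sum f l -> Un_cv (fun n => psum f (S n)) l.
Proof.
  intros H eps He. destruct (H eps He) as [N HN]. exists N.
  intros n Hn. rewrite <- sum_f_R0_psum. apply HN. lia.
Qed.

Lemma series_terms f l : infinite_sum f l -> Un_cv f 0.
Proof.
  intros H. apply (CV_shift f 1).
  assert (E : forall n, f (n + 1)%nat = sum_f_R0 f (n + 1) - sum_f_R0 f n).
  { intros n. replace (n + 1)%nat with (S n) by lia. simpl. ring. }
  intros eps He. destruct (CV_minus _ _ _ _ (CV_shift' _ 1 _ H) H eps He) as [N HN].
  exists N. intros n Hn. rewrite E. specialize (HN n Hn). simpl in HN.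
  replace (l - l) with 0 in HN by ring. exact HN.
Qed.

Lemma psum_le_series f l : (forall i, 0 <= f i) -> infinite_sum f l ->
  forall n, psum f n <= l.
Proof.
  intros Hf H n. apply Rle_trans with (psum f (S n)).
  - rewrite psum_S. specialize (Hf n). lra.
  - rewrite <- sum_f_R0_psum. apply sum_incr; assumption.
Qed.

Lemma CV_pred u l : Un_cv u l -> Un_cv (fun n => u (pred n)) l.
Proof. intros Hu eps He. destruct (Hu eps He) as [N HN]. exists (S N). intros n Hn. apply HN. lia. Qed.

Lemma series_finite f N : (forall n, (N < n)%nat -> f n = 0) ->
  infinite_sum f (psum f (S N)).
Proof.
  intros H eps He. exists N. intros n Hn. rewrite sum_f_R0_psum.
  replace (psum f (S n)) with (psum f (S N)).
  - unfold Rdist. rewrite Rminus_diag, Rabs_R0. lra.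
  - induction Hn; [reflexivity|]. rewrite (psum_S f (S m)), <- IHHn, H by lia. ring.
Qed.

Lemma cv_le_eventually u v a b N0 : Un_cv u a -> Un_cv v b ->
  (forall n, (N0 <= n)%nat -> u n <= v n) -> a <= b.
Proof.
  intros Hu Hv H.
  apply (@Rle_cv_lim (fun n => u (n + N0)%nat) (fun n => v (n + N0)%nat));
    [intros; apply H; lia | apply CV_shift'; assumption | apply CV_shift'; assumption].
Qed.

Section Poisson.

Variable lam : R.
Hypothesis Hlam : 0 < lam.

Notation pi := (poi_pmf lam).
Notation Pi := (poi_tail lam).

Lemma poi_pos j : 0 < pi j.
Proof.
  unfold poi_pmf. apply Rdiv_lt_0_compat; [apply Rmult_lt_0_compat|].
  - apply exp_pos.
  - apply pow_lt; assumption.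
  - apply INR_fact_lt_0.
Qed.

Lemma poi_rec j : INR (S j) * pi (S j) = lam * pi j.
Proof.
  unfold poi_pmf. rewrite fact_simpl, mult_INR. simpl pow.
  pose proof (INR_fact_lt_0 j). assert (INR (S j) > 0) by (apply lt_0_INR; lia).
  field. lra.
Qed.

Lemma poi_succ j : pi (S j) = lam * pi j / INR (S j).
Proof.
  assert (INR (S j) > 0) by (apply lt_0_INR; lia).
  rewrite <- poi_rec. field. lra.
Qed.

Lemma poi_sum : infinite_sum pi 1.
Proof.
  pose proof (proj2_sig (exist_exp lam)) as H. fold (exp lam) in H.
  intros eps He. destruct (CV_mult _ _ _ _ (CV_const (exp (- lam))) H eps He) as [N HN].
  exists N. intros n Hn. specialize (HN n Hn).
  rewrite <- exp_plus, Rplus_opp_l, exp_0 in HN.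
  rewrite (sum_eq _ (fun i => / INR (fact i) * lam ^ i * exp (- lam))).
  - rewrite <- scal_sum. exact HN.
  - intros. unfold poi_pmf. field. pose proof (INR_fact_lt_0 i). lra.
Qed.

Lemma poi_psum_le1 n : psum pi n <= 1.
Proof. apply psum_le_series; [intros; left; apply poi_pos | apply poi_sum]. Qed.

Lemma poi_tail_S j : Pi j = pi j + Pi (S j).
Proof. unfold poi_tail. rewrite psum_S. ring. Qed.

Lemma poi_tail_ge j : pi j <= Pi j.
Proof. unfold poi_tail. pose proof (poi_psum_le1 (S j)) as Hle. rewrite psum_S in Hle. lra. Qed.

Lemma poi_tail_range j : 0 < Pi j <= 1.
Proof.
  pose proof (poi_tail_ge j). pose proof (poi_pos j).
  pose proof (psum_nonneg pi j (fun i => Rlt_le _ _ (poi_pos i))).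
  unfold poi_tail in *. lra.
Qed.

Lemma poi_mean_psum N :
  psum (fun i => INR i * pi i) (S N) = lam * psum pi N.
Proof.
  induction N; [simpl; ring|].
  rewrite (psum_S _ (S N)), IHN, poi_rec, (psum_S pi N). ring.
Qed.

(* Tail bound (m + 1 - lam) P(Y > m) <= lam pi(m): the mean of Y restricted
   to {Y > m} is at least (m + 1) P(Y > m). *)
Lemma poi_tail_bound m : (INR (S m) - lam) * Pi (S m) <= lam * pi m.
Proof.
  assert (Hpos : forall i, 0 <= pi i) by (intros; left; apply poi_pos).
  apply (cv_le_eventually
           (fun N => (INR (S m) - lam) * (psum pi (S N) - psum pi (S m)))
           (fun _ => lam * pi m) _ _ (S m)).
  - apply CV_mult; [apply CV_const|]. unfold poi_tail.
    apply CV_minus; [apply series_psum, poi_sum | apply CV_const].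
  - apply CV_const.
  - intros N HN.
    assert (A : INR (S m) * (psum pi (S N) - psum pi (S m)) <=
                psum (fun i => INR i * pi i) (S N) - psum (fun i => INR i * pi i) (S m)).
    { rewrite Rmult_minus_distr_l, <- !psum_scal.
      apply psum_window_le; [lia|]. intros i Hi.
      apply Rmult_le_compat_r; [apply Hpos | apply le_INR; lia]. }
    rewrite !poi_mean_psum in A. rewrite (psum_S pi N), (psum_S pi m) in *.
    specialize (Hpos N). nra.
Qed.

Definition tail_ratio N := Pi (S N) / pi N.

Lemma tail_ratio_nonneg N : 0 <= tail_ratio N.
Proof. apply Rdiv_nonneg; [apply Rlt_le, poi_tail_range | apply poi_pos]. Qed.

Lemma tail_ratio_rec N : tail_ratio N = lam / INR (S N) * (1 + tail_ratio (S N)).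
Proof.
  unfold tail_ratio. rewrite (poi_tail_S (S N)), poi_succ.
  pose proof (poi_pos N). assert (INR (S N) > 0) by (apply lt_0_INR; lia).
  field. split; lra.
Qed.

Lemma tail_ratio_bound N : (INR (S N) - lam) * tail_ratio N <= lam.
Proof.
  unfold tail_ratio. pose proof (poi_tail_bound N). pose proof (poi_pos N).
  unfold Rdiv. rewrite <- Rmult_assoc. apply Rmult_le_reg_r with (pi N); [lra|].
  rewrite Rmult_assoc, Rinv_l by lra. lra.
Qed.

Lemma tail_ratio_le1 N : 2 * lam <= INR N -> tail_ratio N <= 1.
Proof.
  intros HN. pose proof (tail_ratio_bound N). pose proof (tail_ratio_nonneg N).
  rewrite S_INR in *. nra.
Qed.

Lemma tail_ratio_step m : lam <= INR (S m) ->
  Rabs (tail_ratio m - tail_ratio (S m)) <= 1.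
Proof.
  intros Hm. rewrite tail_ratio_rec.
  pose proof (tail_ratio_bound (S m)). pose proof (tail_ratio_nonneg (S m)).
  set (r := tail_ratio (S m)) in *. rewrite (S_INR (S m)) in *. set (s := INR (S m)) in *.
  assert (Hs : 0 < s) by lra.
  replace (lam / s * (1 + r) - r) with ((lam - (s - lam) * r) / s) by (field; lra).
  apply Rabs_div_le; [lra|]. apply Rabs_le. nra.
Qed.

Lemma poi_tail_shift_bound j : INR j * Pi (S j) <= lam * Pi j.
Proof.
  pose proof (poi_tail_bound j). rewrite (poi_tail_S j).
  pose proof (poi_tail_range (S j)). rewrite S_INR in *. nra.
Qed.

Definition head_ratio n := psum pi (S n) / pi n.

Lemma head_ratio_psum n : psum pi (S n) = head_ratio n * pi n.
Proof. unfold head_ratio. pose proof (poi_pos n). field. lra. Qed.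

Lemma head_ratio_0 : head_ratio 0 = 1.
Proof. unfold head_ratio. simpl. pose proof (poi_pos 0). field. lra. Qed.

Lemma head_ratio_rec n : head_ratio (S n) = 1 + INR (S n) / lam * head_ratio n.
Proof.
  unfold head_ratio. rewrite (psum_S pi (S n)), poi_succ.
  pose proof (poi_pos n). assert (INR (S n) > 0) by (apply lt_0_INR; lia).
  field. repeat split; lra.
Qed.

Lemma head_ratio_ge1 n : 1 <= head_ratio n.
Proof.
  unfold head_ratio. pose proof (poi_pos n).
  pose proof (psum_nonneg pi n (fun i => Rlt_le _ _ (poi_pos i))).
  apply Rmult_le_reg_r with (pi n); [lra|]. unfold Rdiv.
  rewrite Rmult_assoc, Rinv_l, psum_S; lra.
Qed.

Lemma head_ratio_upper n : INR n < lam -> head_ratio n <= lam / (lam - INR n).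
Proof.
  induction n; intros Hn.
  - rewrite head_ratio_0. simpl. replace (lam / (lam - 0)) with 1 by (field; lra). lra.
  - rewrite S_INR in *. assert (IH := IHn ltac:(lra)).
    rewrite head_ratio_rec, S_INR. pose proof (pos_INR n).
    apply Rle_trans with (1 + (INR n + 1) / lam * (lam / (lam - INR n))).
    + apply Rplus_le_compat_l, Rmult_le_compat_l; [apply Rdiv_nonneg|]; lra.
    + replace (1 + (INR n + 1) / lam * (lam / (lam - INR n))) with ((lam + 1) / (lam - INR n))
        by (field; lra).
      apply Rmult_le_reg_r with ((lam - INR n) * (lam - (INR n + 1))); [nra|].
      replace ((lam + 1) / (lam - INR n) * ((lam - INR n) * (lam - (INR n + 1))))
        with ((lam + 1) * (lam - (INR n + 1))) by (field; lra).
      replace (lam / (lam - (INR n + 1)) * ((lam - INR n) * (lam - (INR n + 1))))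
        with (lam * (lam - INR n)) by (field; lra).
      nra.
Qed.

Lemma head_ratio_step m : INR (S m) < lam ->
  0 <= head_ratio (S m) - head_ratio m <= 1.
Proof.
  intros Hm. rewrite head_ratio_rec. rewrite S_INR in *.
  pose proof (head_ratio_upper m ltac:(lra)). pose proof (head_ratio_ge1 m).
  replace (1 + (INR m + 1) / lam * head_ratio m - head_ratio m)
    with (1 - (lam - (INR m + 1)) / lam * head_ratio m) by (field; lra).
  assert (0 <= (lam - (INR m + 1)) / lam * head_ratio m)
    by (apply Rmult_le_pos; [apply Rdiv_nonneg|]; lra).
  assert ((lam - (INR m + 1)) / lam * head_ratio m
          <= (lam - (INR m + 1)) / lam * (lam / (lam - INR m)))
    by (apply Rmult_le_compat_l; [apply Rdiv_nonneg|]; lra).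
  replace ((lam - (INR m + 1)) / lam * (lam / (lam - INR m)))
    with (1 - 1 / (lam - INR m)) in * by (field; lra).
  assert (0 < 1 / (lam - INR m)) by (apply Rdiv_lt_0_compat; lra).
  lra.
Qed.

End Poisson.

Definition poi_ratio (q : nat -> R) (lam : R) (i : nat) : R := q i / poi_pmf lam i.

(* For the law q of W one
   takes g n = P(W = n, Delta = 1) - P(W = n - 1, Delta = -1). *)
Section Stein.

Variables (q g : nat -> R) (lam d1 d2 : R).
Hypothesis Hlam : 0 < lam.
Hypothesis Hd1 : 0 <= d1.
Hypothesis Hd2 : 0 <= d2.
Hypothesis Hq_nonneg : forall n, 0 <= q n.
Hypothesis Hq_sum : infinite_sum q 1.
Hypothesis Hq_mean : infinite_sum (fun n => INR n * q n) lam.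
Hypothesis Hstein : forall m, INR (S m) * q (S m) = lam * (q m + g (S m) - g m).
Hypothesis Hg_up : forall n, g n <= d2 * INR n * q n.
Hypothesis Hg_low : forall n, - (d1 * q (pred n)) <= g n.
Hypothesis Hg0 : g 0%nat = 0.
Hypothesis Hg_q : forall n, g n <= q n.

Notation rho := (tail_ratio lam).
Notation ell := (head_ratio lam).
Notation h := (poi_ratio q lam).
Notation pi := (poi_pmf lam).
Notation Pi := (poi_tail lam).

Lemma g_abs n : Rabs (g n) <= d2 * INR n * q n + d1 * q (pred n).
Proof.
  pose proof (Hg_up n). pose proof (Hg_low n). pose proof (pos_INR n).
  pose proof (Hq_nonneg n). pose proof (Hq_nonneg (pred n)).
  assert (0 <= d2 * INR n * q n) by (repeat apply Rmult_le_pos; assumption).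
  assert (0 <= d1 * q (pred n)) by (apply Rmult_le_pos; assumption).
  apply Rabs_le. lra.
Qed.

Lemma q_psum_range n : 0 <= psum q n <= 1.
Proof. split; [apply psum_nonneg | apply psum_le_series]; assumption. Qed.

Lemma q_le1 n : q n <= 1.
Proof. pose proof (q_psum_range (S n)). pose proof (q_psum_range n). rewrite psum_S in *. lra. Qed.

(* Summation of the recursion weighted by the Poisson tail ratios rho. *)
Lemma tail_window_identity k N : (k <= N)%nat ->
  psum q (S N) - psum q k
  = q k + rho k * (q k - g k)
    + (psum (fun m => (rho (pred m) - rho m) * g m) (S N)
       - psum (fun m => (rho (pred m) - rho m) * g m) (S k))
    - rho N * (q N - g N).
Proof.
  intros HkN. induction HkN; [rewrite psum_S; ring|].
  assert (Hstep : rho m * (q m + g (S m) - g m) = (1 + rho (S m)) * q (S m)).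
  { assert (INR (S m) > 0) by (apply lt_0_INR; lia).
    rewrite (tail_ratio_rec lam Hlam m).
    replace (lam / INR (S m) * (1 + rho (S m)) * (q m + g (S m) - g m))
      with ((1 + rho (S m)) * (lam * (q m + g (S m) - g m)) / INR (S m)) by (field; lra).
    rewrite <- Hstein. field. lra. }
  rewrite (psum_S q (S m)), (psum_S _ (S m)). simpl pred. lra.
Qed.

Lemma mean_window_identity k N : (k <= N)%nat ->
  psum (fun m => INR m * q m) (S N) - psum (fun m => INR m * q m) (S k)
  = lam * (psum q N - psum q k + g N - g k).
Proof.
  intros HkN. induction HkN; [ring|].
  rewrite (psum_S _ (S m)), (psum_S q m), Hstein. lra.
Qed.

(* Beyond the mean, the defect sum in [tail_window_identity] is bounded by
   the window mass through the mean identity. *)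
Lemma defect_window_bound k N : lam <= INR k -> (k <= N)%nat ->
  Rabs (psum (fun m => (rho (pred m) - rho m) * g m) (S N)
        - psum (fun m => (rho (pred m) - rho m) * g m) (S k))
  <= d2 * lam * (psum q N - psum q k + g N - g k) + d1 * (psum q N - psum q k).
Proof.
  intros Hk HkN.
  eapply Rle_trans.
  - apply (psum_window_abs _ (fun m => d2 * (INR m * q m) + d1 * q (pred m))); [lia|].
    intros [|m] Hm; [lia|]. simpl pred. rewrite Rabs_mult.
    assert (Rabs (rho m - rho (S m)) <= 1).
    { apply tail_ratio_step; [assumption|]. apply Rle_trans with (INR k); [assumption|].
      apply le_INR; lia. }
    pose proof (g_abs (S m)). pose proof (Rabs_pos (g (S m))). simpl pred in *.
    apply Rle_trans with (1 * Rabs (g (S m))); [apply Rmult_le_compat_r; lra | lra].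
  - rewrite !psum_plus, !psum_scal, !psum_shift.
    rewrite Rmult_assoc, <- (mean_window_identity k N HkN). right. ring.
Qed.

Lemma tail_window_estimate k N : lam <= INR k -> (k <= N)%nat -> 2 * lam <= INR N ->
  Rabs (psum q (S N) - psum q k - (q k + rho k * (q k - g k)))
  <= (d1 + d2 * lam) * (psum q (S N) - psum q k) + d2 * lam * d1 * q (pred k)
     + (d2 * d2 * lam * (INR N * q N) + (q N + d1 * q (pred N))).
Proof.
  intros Hk HkN HN.
  pose proof (tail_window_identity k N HkN) as Eq.
  pose proof (defect_window_bound k N Hk HkN) as HD.
  set (D := psum (fun m => (rho (pred m) - rho m) * g m) (S N)
            - psum (fun m => (rho (pred m) - rho m) * g m) (S k)) in *.
  pose proof (tail_ratio_le1 lam Hlam N HN). pose proof (tail_ratio_nonneg lam Hlam N).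
  pose proof (Hg_up N). pose proof (Hg_low k). pose proof (Hg_low N). pose proof (Hg_q N).
  pose proof (psum_mono q k N Hq_nonneg HkN).
  assert (psum q N <= psum q (S N)) by (rewrite psum_S; specialize (Hq_nonneg N); lra).
  pose proof (Hq_nonneg N). pose proof (Hq_nonneg (pred k)).
  assert (0 <= rho N * (q N - g N) <= q N + d1 * q (pred N)) by (split; nra).
  assert (d2 * lam * (g N - g k) <= d2 * d2 * lam * (INR N * q N) + d2 * lam * d1 * q (pred k)).
  { replace (d2 * d2 * lam * (INR N * q N) + d2 * lam * d1 * q (pred k))
      with (d2 * lam * (d2 * INR N * q N + d1 * q (pred k))) by ring.
    apply Rmult_le_compat_l; [nra | lra]. }
  assert (d2 * lam * (psum q N - psum q k) <= d2 * lam * (psum q (S N) - psum q k))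
    by (apply Rmult_le_compat_l; [nra | lra]).
  assert (d1 * (psum q N - psum q k) <= d1 * (psum q (S N) - psum q k))
    by (apply Rmult_le_compat_l; lra).
  apply Rabs_le_inv in HD. apply Rabs_le.
  replace (psum q (S N) - psum q k - (q k + rho k * (q k - g k)))
    with (D - rho N * (q N - g N)) by lra.
  split; lra.
Qed.

Lemma right_tail_estimate k : lam <= INR k ->
  Rabs ((1 - psum q k) - (q k + rho k * (q k - g k)))
  <= (d1 + d2 * lam) * (1 - psum q k) + d2 * lam * d1 * q (pred k).
Proof.
  intros Hk. destruct (INR_unbounded (2 * lam)) as [n Hn].
  set (A := q k + rho k * (q k - g k)).
  set (SN := fun N => psum q (S N) - psum q k).
  set (z := fun N => d2 * d2 * lam * (INR N * q N) + (q N + d1 * q (pred N))).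
  assert (HS : Un_cv SN (1 - psum q k))
    by (apply CV_minus; [apply series_psum; assumption | apply CV_const]).
  assert (Hz : Un_cv z 0).
  { replace 0 with (d2 * d2 * lam * 0 + (0 + d1 * 0)) by ring.
    pose proof (series_terms _ _ Hq_sum) as Hq0.
    apply CV_plus; [apply CV_mult; [apply CV_const | exact (series_terms _ _ Hq_mean)]|].
    apply CV_plus; [exact Hq0 | apply CV_mult; [apply CV_const | exact (CV_pred _ _ Hq0)]]. }
  assert (Hlim : Un_cv (fun N => Rabs (SN N - A) - z N) (Rabs (1 - psum q k - A) - 0))
    by (apply CV_minus; [apply cv_cvabs, CV_minus; [exact HS | apply CV_const] | exact Hz]).
  rewrite Rminus_0_r in Hlim.
  apply (cv_le_eventually _ (fun N => (d1 + d2 * lam) * SN N + d2 * lam * d1 * q (pred k))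
           _ _ (n + k) Hlim).
  - apply CV_plus; [apply CV_mult; [apply CV_const | exact HS] | apply CV_const].
  - intros N HN.
    assert (HN2 : 2 * lam <= INR N) by (apply Rle_trans with (INR n); [lra | apply le_INR; lia]).
    pose proof (tail_window_estimate k N Hk ltac:(lia) HN2). unfold SN, z, A. lra.
Qed.

(* Summation of the recursion weighted by the Poisson head ratios ell. *)
Lemma head_identity n :
  psum q (S n) = ell n * (q n - g n) + psum (fun m => (ell m - ell (pred m)) * g m) (S n).
Proof.
  induction n.
  - simpl. rewrite head_ratio_0, Hg0 by assumption. ring.
  - rewrite (psum_S q (S n)), (psum_S _ (S n)), IHn. simpl pred.
    assert (E : INR (S n) / lam * ell n * q (S n) = ell n * (q n + g (S n) - g n)).
    { replace (INR (S n) / lam * ell n * q (S n)) with (ell n * (INR (S n) * q (S n)) / lam)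
        by (field; lra).
      rewrite Hstein. field. lra. }
    rewrite (head_ratio_rec lam Hlam n).
    replace ((1 + INR (S n) / lam * ell n) * (q (S n) - g (S n)))
      with (q (S n) - g (S n) + INR (S n) / lam * ell n * q (S n)
            - INR (S n) / lam * ell n * g (S n)) by ring.
    rewrite E.
    ring.
Qed.

Lemma q_as_ratio i : q i = h i * pi i.
Proof. unfold poi_ratio. pose proof (poi_pos lam Hlam i). field. lra. Qed.

Lemma ratio_nonneg i : 0 <= h i.
Proof. apply Rdiv_nonneg; [apply Hq_nonneg | apply poi_pos; assumption]. Qed.

(* For g = 0, h would be constant: its increments are the defect increments. *)
Lemma ratio_step m : h (S m) - h m = (g (S m) - g m) / pi m.
Proof.
  unfold poi_ratio. pose proof (poi_pos lam Hlam m).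
  assert (INR (S m) > 0) by (apply lt_0_INR; lia).
  replace (q (S m) / pi (S m)) with (INR (S m) * q (S m) / (INR (S m) * pi (S m)))
    by (pose proof (poi_pos lam Hlam (S m)); field; lra).
  rewrite Hstein, poi_rec by assumption. field. lra.
Qed.

(* Poisson identity pi n (1 + rho n) = Pi n, multiplied by h n. *)
Lemma tail_point_identity n : q n + rho n * q n = Pi n * h n.
Proof.
  unfold tail_ratio, poi_ratio. rewrite (poi_tail_S lam n).
  pose proof (poi_pos lam Hlam n). field. lra.
Qed.

(* Total mass 1, split at n + 1 between the head and tail identities. *)
Lemma mass_identity n :
  1 - h n = Pi (S n) * (h (S n) - h n) - ell n * g n
            + psum (fun m => (ell m - ell (pred m)) * g m) (S n)
            + ((1 - psum q (S n)) - (q (S n) + rho (S n) * (q (S n) - g (S n))))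
            - rho (S n) * g (S n).
Proof.
  pose proof (head_identity n) as HI.
  pose proof (tail_point_identity (S n)) as TP.
  assert (Hpi : 1 = ell n * pi n + Pi (S n))
    by (unfold poi_tail; rewrite <- head_ratio_psum by assumption; ring).
  assert (Hh : h n = ell n * q n + Pi (S n) * h n).
  { transitivity (h n * (ell n * pi n + Pi (S n))); [rewrite <- Hpi; ring|].
    rewrite (q_as_ratio n). ring. }
  lra.
Qed.

Lemma head_defect_bound j : INR j < lam ->
  Rabs (psum (fun m => (ell m - ell (pred m)) * g m) (S j)) <= 2 * (d1 + d2 * lam).
Proof.
  intros Hj. eapply Rle_trans; [apply psum_abs|].
  apply Rle_trans with (psum (fun m => d2 * lam * q m + d1 * q (pred m)) (S j)).
  - apply psum_le. intros [|m] Hm.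
    + simpl. rewrite Hg0, Rmult_0_r, Rabs_R0.
      pose proof (Hq_nonneg 0). assert (0 <= d2 * lam) by nra. nra.
    + assert (Hm' : INR (S m) < lam)
        by (apply Rle_lt_trans with (INR j); [apply le_INR; lia | assumption]).
      simpl pred. rewrite Rabs_mult, Rabs_right by (apply Rle_ge, head_ratio_step; assumption).
      pose proof (head_ratio_step lam Hlam m Hm'). pose proof (g_abs (S m)). simpl pred in *.
      pose proof (Rabs_pos (g (S m))). pose proof (Hq_nonneg (S m)).
      assert (d2 * INR (S m) * q (S m) <= d2 * lam * q (S m))
        by (rewrite !Rmult_assoc; apply Rmult_le_compat_l; [|apply Rmult_le_compat_r]; lra).
      nra.
  - rewrite psum_plus, !psum_scal, psum_shift.
    pose proof (q_psum_range (S j)). pose proof (q_psum_range j). pose proof (q_le1 0).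
    assert (0 <= d2 * lam) by nra.
    assert (d2 * lam * psum q (S j) <= d2 * lam) by nra.
    assert (d1 * (q 0%nat + psum q j) <= d1 * 2) by (apply Rmult_le_compat_l; lra).
    lra.
Qed.

Section Comparison.

Variables (k j : nat) (M : R).
Let eps := d1 + d2 * lam.
Let u := eps * (1 + (INR k - lam) ^ 2 / lam).
Hypothesis Hk : lam <= INR k.
Hypothesis Hj : INR j < lam <= INR (S j).
Hypothesis Hu : u <= 1 / 44.
Hypothesis HM_ub : forall i, (pred j <= i <= k)%nat -> h i <= M.
Hypothesis HM_att : exists i, (pred j <= i <= k)%nat /\ h i = M.

Lemma mean_below_k : (S j <= k)%nat.
Proof. destruct Hj. apply INR_lt. lra. Qed.

Lemma max_nonneg : 0 <= M.
Proof. pose proof mean_below_k. pose proof (ratio_nonneg k). pose proof (HM_ub k ltac:(lia)). lra. Qed.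

Lemma eps_bounds : 0 <= eps /\ d1 <= eps /\ d2 * lam <= eps /\ eps <= u /\
  eps * (INR k / lam) <= 2 * u /\ eps * ((INR k - lam) ^ 2 / lam) <= u.
Proof.
  pose proof mean_below_k.
  assert (0 <= d2 * lam) by nra.
  assert (0 <= (INR k - lam) ^ 2 / lam) by (apply Rdiv_nonneg; [nra | lra]).
  assert (INR k / lam <= 2 * (1 + (INR k - lam) ^ 2 / lam))
    by (apply ratio_by_deviation; [lra | lra | apply (le_INR 1); lia]).
  unfold u, eps in *. repeat split; nra.
Qed.

Lemma defect_local m : (pred j <= m)%nat -> (S m <= k)%nat ->
  Rabs (g (S m)) <= eps * M * pi m.
Proof.
  intros Hm1 Hm2. pose proof (g_abs (S m)) as X. simpl pred in X.
  rewrite (q_as_ratio (S m)), (q_as_ratio m) in X.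
  replace (d2 * INR (S m) * (h (S m) * pi (S m))) with (d2 * h (S m) * (INR (S m) * pi (S m)))
    in X by ring.
  rewrite poi_rec in X by assumption.
  assert (h (S m) <= M) by (apply HM_ub; lia). assert (h m <= M) by (apply HM_ub; lia).
  pose proof (poi_pos lam Hlam m). pose proof (ratio_nonneg (S m)). pose proof (ratio_nonneg m).
  assert (d2 * h (S m) * (lam * pi m) <= d2 * lam * M * pi m).
  { replace (d2 * h (S m) * (lam * pi m)) with ((d2 * lam * pi m) * h (S m)) by ring.
    replace (d2 * lam * M * pi m) with ((d2 * lam * pi m) * M) by ring.
    apply Rmult_le_compat_l; [apply Rmult_le_pos; [apply Rmult_le_pos|]; lra | assumption]. }
  assert (d1 * (h m * pi m) <= d1 * M * pi m).
  { rewrite Rmult_assoc. apply Rmult_le_compat_l; [lra|]. apply Rmult_le_compat_r; lra. }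
  unfold eps. lra.
Qed.

(* The same bound at n, using lam pi(n - 1) = n pi(n). *)
Lemma defect_local_scaled n : (pred j <= pred n)%nat -> (n <= k)%nat ->
  Rabs (g n) <= INR n / lam * (eps * M * pi n).
Proof.
  intros Hn1 Hn2. destruct n as [|m].
  - rewrite Hg0, Rabs_R0. simpl. unfold Rdiv. lra.
  - replace (INR (S m) / lam * (eps * M * pi (S m)))
      with (eps * M * ((INR (S m) * pi (S m)) / lam)) by (field; lra).
    rewrite poi_rec by assumption. replace (lam * pi m / lam) with (pi m) by (field; lra).
    apply defect_local; simpl in Hn1; lia.
Qed.

Lemma ratio_jump_at_mean : Rabs (h (S j) - h j) <= 2 * eps * M.
Proof.
  pose proof mean_below_k.
  rewrite ratio_step. apply Rabs_div_le; [apply poi_pos; assumption|].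
  pose proof (defect_local j ltac:(lia) ltac:(lia)).
  pose proof (defect_local_scaled j ltac:(lia) ltac:(lia)).
  assert (INR j / lam * (eps * M * pi j) <= eps * M * pi j).
  { rewrite <- (Rmult_1_l (eps * M * pi j)) at 2. apply Rmult_le_compat_r.
    - pose proof eps_bounds. pose proof max_nonneg. pose proof (poi_pos lam Hlam j).
      apply Rmult_le_pos; [apply Rmult_le_pos|]; lra.
    - apply Rmult_le_reg_r with lam; [lra|]. unfold Rdiv.
      rewrite Rmult_assoc, Rinv_l; lra. }
  eapply Rle_trans; [apply Rabs_sub_le | lra].
Qed.

Lemma ratio_before_mean : h (pred j) <= h j + 2 * eps * M.
Proof.
  pose proof eps_bounds. pose proof max_nonneg. pose proof mean_below_k.
  assert (0 <= eps * M) by (apply Rmult_le_pos; lra).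
  destruct (Nat.eq_dec j 0) as [E0|Hj0]; [rewrite E0; simpl; lra|].
  set (l := pred j). assert (Ej : S l = j) by (unfold l; lia).
  pose proof (ratio_step l) as X. pose proof (poi_pos lam Hlam l).
  pose proof (defect_local l ltac:(unfold l; lia) ltac:(lia)) as Y. apply Rabs_le_inv in Y.
  rewrite Ej in X, Y.
  pose proof (Hg_up l) as Z. rewrite (q_as_ratio l) in Z.
  assert (INR l <= lam) by (destruct Hj as [Hj1 _]; rewrite <- Ej, S_INR in Hj1; lra).
  assert (h l <= M) by (apply HM_ub; unfold l; lia). pose proof (ratio_nonneg l).
  assert (d2 * INR l * (h l * pi l) <= d2 * lam * M * pi l).
  { replace (d2 * INR l * (h l * pi l)) with (d2 * pi l * (INR l * h l)) by ring.
    replace (d2 * lam * M * pi l) with (d2 * pi l * (lam * M)) by ring.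
    apply Rmult_le_compat_l; [nra|]. apply Rmult_le_compat; try lra. apply pos_INR. }
  assert (h j - h l >= - (2 * eps * M)).
  { rewrite X. apply Rle_ge. unfold Rdiv.
    apply Rmult_le_reg_r with (pi l); [lra|].
    replace ((g j - g l) * / pi l * pi l) with (g j - g l) by (field; lra).
    assert (d2 * lam * M * pi l <= eps * M * pi l)
      by (apply Rmult_le_compat_r; [lra|]; apply Rmult_le_compat_r; lra).
    lra. }
  lra.
Qed.

(* The modified ratio t = h - g / pi, whose increments are small beyond the mean. *)
Let t i := h i - g i / pi i.

Lemma modified_step m : t (S m) - t m = g (S m) * (lam - INR (S m)) / (lam * pi m).
Proof.
  unfold t. pose proof (poi_pos lam Hlam m).
  assert (INR (S m) > 0) by (apply lt_0_INR; lia).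
  replace (h (S m) - g (S m) / pi (S m) - (h m - g m / pi m))
    with ((h (S m) - h m) - g (S m) / pi (S m) + g m / pi m) by ring.
  rewrite ratio_step, (poi_succ lam m). field. repeat split; lra.
Qed.

(* Beyond the mean |lam - (m+1)| <= k - lam, so each step of t is
   O(eps M (k - lam) / lam). *)
Lemma modified_step_bound m : (S j <= m)%nat -> (S m <= k)%nat ->
  Rabs (t (S m) - t m) <= eps * M * ((INR k - lam) / lam).
Proof.
  intros Hm1 Hm2. pose proof (poi_pos lam Hlam m).
  rewrite modified_step. apply Rabs_div_le; [nra|].
  rewrite Rabs_mult. pose proof (defect_local m ltac:(lia) Hm2).
  assert (Rabs (lam - INR (S m)) <= INR k - lam).
  { assert (INR (S j) <= INR m) by (apply le_INR; lia).
    assert (INR (S m) <= INR k) by (apply le_INR; lia).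
    rewrite S_INR in *. apply Rabs_le. lra. }
  replace (eps * M * ((INR k - lam) / lam) * (lam * pi m))
    with ((eps * M * pi m) * (INR k - lam)) by (field; lra).
  apply Rmult_le_compat; auto using Rabs_pos.
Qed.

Lemma modified_drift i : (S j + i <= k)%nat ->
  Rabs (t (S j + i)%nat - t (S j)) <= INR i * (eps * M * ((INR k - lam) / lam)).
Proof.
  induction i; intros Hi.
  - rewrite Nat.add_0_r, Rminus_diag, Rabs_R0. simpl. lra.
  - replace (S j + S i)%nat with (S (S j + i)) by lia.
    replace (t (S (S j + i)) - t (S j))
      with ((t (S (S j + i)) - t (S j + i)%nat) + (t (S j + i)%nat - t (S j))) by ring.
    eapply Rle_trans; [apply Rabs_triang|]. rewrite S_INR.
    pose proof (modified_step_bound (S j + i) ltac:(lia) ltac:(lia)).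
    pose proof (IHi ltac:(lia)). lra.
Qed.

Lemma ratio_modified_close i : (S j <= i <= k)%nat -> Rabs (h i - t i) <= 2 * u * M.
Proof.
  intros Hi. unfold t. replace (h i - (h i - g i / pi i)) with (g i / pi i) by ring.
  pose proof (poi_pos lam Hlam i). pose proof eps_bounds. pose proof max_nonneg.
  apply Rabs_div_le; [assumption|].
  eapply Rle_trans; [apply defect_local_scaled; lia|].
  assert (INR i / lam <= INR k / lam)
    by (apply Rmult_le_compat_r; [left; apply Rinv_0_lt_compat; lra | apply le_INR; lia]).
  assert (0 <= M * pi i) by (apply Rmult_le_pos; lra).
  replace (INR i / lam * (eps * M * pi i)) with (eps * (INR i / lam) * (M * pi i)) by ring.
  replace (2 * u * M * pi i) with (2 * u * (M * pi i)) by ring.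
  apply Rmult_le_compat_r; [assumption|]. nra.
Qed.

Lemma ratio_flat i : (S j <= i <= k)%nat -> Rabs (h i - h (S j)) <= 5 * u * M.
Proof.
  intros Hi. destruct (Nat.le_exists_sub (S j) i ltac:(lia)) as [i' [Ei _]].
  rewrite Nat.add_comm in Ei. subst i.
  pose proof (modified_drift i' ltac:(lia)) as X.
  pose proof eps_bounds. pose proof max_nonneg.
  assert (INR i' <= INR k - lam).
  { assert (Hi' : INR (S j + i') <= INR k) by (apply le_INR; lia).
    rewrite plus_INR, S_INR in Hi'. destruct Hj. rewrite S_INR in *. lra. }
  assert (0 <= eps * M * ((INR k - lam) / lam))
    by (apply Rmult_le_pos; [apply Rmult_le_pos | apply Rdiv_nonneg]; lra).
  assert (INR i' * (eps * M * ((INR k - lam) / lam))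
          <= (INR k - lam) * (eps * M * ((INR k - lam) / lam)))
    by (apply Rmult_le_compat_r; assumption).
  replace ((INR k - lam) * (eps * M * ((INR k - lam) / lam)))
    with (eps * ((INR k - lam) ^ 2 / lam) * M) in * by (field; lra).
  assert (eps * ((INR k - lam) ^ 2 / lam) * M <= u * M) by (apply Rmult_le_compat_r; lra).
  pose proof (ratio_modified_close (S j + i') ltac:(lia)).
  pose proof (ratio_modified_close (S j) ltac:(lia)).
  replace (h (S j + i')%nat - h (S j))
    with ((h (S j + i')%nat - t (S j + i')%nat) + (t (S j + i')%nat - t (S j))
          - (h (S j) - t (S j))) by ring.
  eapply Rle_trans; [apply Rabs_sub_le|].
  eapply Rle_trans; [apply Rplus_le_compat_r, Rabs_triang|]. lra.
Qed.

Lemma ratio_defect_bound n : (pred j <= pred n)%nat -> (n <= k)%nat ->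
  Rabs (rho n * g n) <= eps * M * Pi n.
Proof.
  intros Hn1 Hn2. pose proof eps_bounds. pose proof max_nonneg.
  pose proof (poi_pos lam Hlam n). pose proof (tail_ratio_nonneg lam Hlam n).
  rewrite Rabs_mult, Rabs_right by lra.
  eapply Rle_trans; [apply Rmult_le_compat_l; [lra | apply defect_local_scaled; assumption]|].
  replace (rho n * (INR n / lam * (eps * M * pi n)))
    with (INR n * Pi (S n) / lam * (eps * M)) by (unfold tail_ratio; field; lra).
  replace (eps * M * Pi n) with (Pi n * (eps * M)) by ring.
  apply Rmult_le_compat_r; [apply Rmult_le_pos; lra|].
  apply Rmult_le_reg_r with lam; [lra|]. unfold Rdiv.
  rewrite Rmult_assoc, Rinv_l by lra. pose proof (poi_tail_shift_bound lam Hlam n). lra.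
Qed.

Lemma head_boundary_bound : Rabs (ell j * g j) <= eps * M.
Proof.
  pose proof eps_bounds as [He0 _]. pose proof max_nonneg. pose proof mean_below_k.
  destruct Hj as [Hj1 _].
  pose proof (head_ratio_ge1 lam Hlam j). pose proof (poi_pos lam Hlam j).
  rewrite Rabs_mult, (Rabs_right (ell j)) by lra.
  assert (Hg : Rabs (g j) <= eps * M * pi j).
  { eapply Rle_trans; [apply defect_local_scaled; lia|].
    rewrite <- (Rmult_1_l (eps * M * pi j)) at 2. apply Rmult_le_compat_r.
    - apply Rmult_le_pos; [apply Rmult_le_pos|]; lra.
    - apply Rmult_le_reg_r with lam; [lra|]. unfold Rdiv.
      rewrite Rmult_assoc, Rinv_l; lra. }
  pose proof (poi_psum_le1 lam Hlam (S j)) as Hmass.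
  rewrite (head_ratio_psum lam Hlam j) in Hmass.
  apply Rle_trans with (ell j * (eps * M * pi j)); [apply Rmult_le_compat_l; lra|].
  replace (ell j * (eps * M * pi j)) with ((eps * M) * (ell j * pi j)) by ring.
  rewrite <- (Rmult_1_r (eps * M)) at 2. apply Rmult_le_compat_l; [|lra].
  apply Rmult_le_pos; lra.
Qed.

(* Normalization: total mass 1 forces h to be close to 1 at the mean.  Each
   term of [mass_identity] at j is bounded separately. *)
Lemma ratio_at_mean : Rabs (1 - h j) <= 4 * eps * M + 4 * eps.
Proof.
  pose proof eps_bounds as [He0 [Hed1 [Hed2 [Heu _]]]]. pose proof max_nonneg.
  pose proof mean_below_k. destruct Hj as [Hj1 Hj2].
  pose proof (poi_tail_range lam Hlam (S j)).
  assert (0 <= eps * M) by (apply Rmult_le_pos; lra).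
  assert (B1 : Rabs (Pi (S j) * (h (S j) - h j)) <= 2 * eps * M).
  { pose proof ratio_jump_at_mean. pose proof (Rabs_pos (h (S j) - h j)).
    rewrite Rabs_mult, Rabs_right by lra. nra. }
  pose proof head_boundary_bound as B2.
  pose proof (head_defect_bound j Hj1) as B3.
  pose proof (right_tail_estimate (S j) Hj2) as B4. simpl pred in B4.
  assert (d2 * lam * d1 * q j <= eps).
  { pose proof (q_le1 j). pose proof (Hq_nonneg j). assert (0 <= d2 * lam) by nra.
    assert (d2 * lam * d1 <= eps * eps) by (apply Rmult_le_compat; lra).
    assert (eps * eps <= eps) by nra. nra. }
  assert ((d1 + d2 * lam) * (1 - psum q (S j)) <= eps)
    by (pose proof (q_psum_range (S j)); unfold eps in *; nra).
  pose proof (ratio_defect_bound (S j) ltac:(simpl; lia) ltac:(lia)) as B5.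
  assert (eps * M * Pi (S j) <= eps * M) by nra.
  apply Rabs_le_inv in B1, B2, B3, B4, B5.
  rewrite mass_identity. apply Rabs_le. unfold eps in *. lra.
Qed.

(* The maximum ratio is bounded: it is attained either near the mean, where
   h is close to 1, or beyond it, where h is flat. *)
Lemma max_le2 : M <= 2.
Proof.
  pose proof eps_bounds as [He0 [_ [_ [Heu _]]]]. pose proof max_nonneg.
  assert (0 <= u * M) by (apply Rmult_le_pos; lra).
  assert (eps * M <= u * M) by (apply Rmult_le_compat_r; lra).
  assert (Hb : M <= h j + 7 * u * M).
  { destruct HM_att as [i [Hi HMi]].
    destruct (le_lt_dec (S j) i) as [Hc|Hc].
    - pose proof (ratio_flat i ltac:(lia)) as X. pose proof ratio_jump_at_mean as Y.
      apply Rabs_le_inv in X. apply Rabs_le_inv in Y. lra.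
    - destruct (Nat.eq_dec i j) as [->|Hne]; [lra|].
      replace i with (pred j) in HMi by lia. pose proof ratio_before_mean. lra. }
  pose proof ratio_at_mean as X. apply Rabs_le_inv in X.
  assert (M * (1 - 11 * u) <= 1 + 4 * u) by nra.
  nra.
Qed.

Lemma ratio_at_k : Rabs (h k - 1) <= 26 * u.
Proof.
  pose proof eps_bounds as [He0 [_ [_ [Heu _]]]]. pose proof max_nonneg. pose proof max_le2.
  pose proof mean_below_k.
  pose proof (ratio_flat k ltac:(lia)) as X. apply Rabs_le_inv in X.
  pose proof ratio_jump_at_mean as Y. apply Rabs_le_inv in Y.
  pose proof ratio_at_mean as Z. apply Rabs_le_inv in Z.
  assert (u * M <= u * 2) by (apply Rmult_le_compat_l; lra).
  assert (eps * M <= u * M) by (apply Rmult_le_compat_r; lra).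
  apply Rabs_le. lra.
Qed.

(* The second-order term d2 lam d1 q(k-1) of the right-tail estimate at k is
   at most eps Pi k, since q(k-1) <= M pi(k-1) = M (k / lam) pi(k). *)
Lemma cross_term_bound : d2 * lam * d1 * q (pred k) <= eps * Pi k.
Proof.
  pose proof eps_bounds as [He0 [Hed1 [Hed2 [Heu [Hek _]]]]].
  pose proof max_nonneg. pose proof max_le2. pose proof mean_below_k.
  set (k1 := pred k). assert (Ek : S k1 = k) by (unfold k1; lia).
  rewrite <- Ek in Hek |- *.
  pose proof (poi_tail_range lam Hlam (S k1)). pose proof (poi_tail_ge lam Hlam (S k1)).
  pose proof (poi_pos lam Hlam k1). pose proof (ratio_nonneg k1).
  assert (h k1 <= M) by (apply HM_ub; unfold k1; lia).
  assert (Epi : pi k1 = INR (S k1) / lam * pi (S k1)).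
  { assert (INR (S k1) > 0) by (apply lt_0_INR; lia).
    rewrite (poi_succ lam k1). field. split; lra. }
  assert (Hq : q k1 <= 2 * (INR (S k1) / lam) * Pi (S k1)).
  { rewrite (q_as_ratio k1), Epi.
    assert (0 <= INR (S k1) / lam) by (apply Rdiv_nonneg; [apply pos_INR | lra]).
    replace (2 * (INR (S k1) / lam) * Pi (S k1)) with (2 * (INR (S k1) / lam * Pi (S k1)))
      by ring.
    apply Rmult_le_compat; [lra | nra | lra | apply Rmult_le_compat_l; lra]. }
  assert (0 <= d2 * lam) by nra. pose proof (Hq_nonneg k1).
  assert (d2 * lam * d1 <= eps * eps) by (apply Rmult_le_compat; lra).
  apply Rle_trans with (eps * eps * (2 * (INR (S k1) / lam) * Pi (S k1))).
  - apply Rmult_le_compat; nra.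
  - replace (eps * eps * (2 * (INR (S k1) / lam) * Pi (S k1)))
      with (2 * eps * (eps * (INR (S k1) / lam)) * Pi (S k1)) by ring.
    apply Rmult_le_compat_r; [lra|]. nra.
Qed.

Lemma tail_vs_ratio_at_k :
  Rabs ((1 - psum q k) - Pi k * h k) <= eps * (1 - psum q k) + 3 * eps * Pi k.
Proof.
  pose proof eps_bounds as [He0 _]. pose proof max_nonneg. pose proof max_le2.
  pose proof (poi_tail_range lam Hlam k). pose proof cross_term_bound.
  pose proof (right_tail_estimate k Hk) as Hr.
  pose proof (ratio_defect_bound k ltac:(pose proof mean_below_k; lia) ltac:(lia)) as Hd.
  pose proof (tail_point_identity k) as TP.
  replace ((1 - psum q k) - Pi k * h k)
    with (((1 - psum q k) - (q k + rho k * (q k - g k))) - rho k * g k) by lra.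
  eapply Rle_trans; [apply Rabs_sub_le|].
  assert (eps * M * Pi k <= 2 * eps * Pi k) by (apply Rmult_le_compat_r; [lra | nra]).
  fold eps in Hr. lra.
Qed.

Lemma tail_ratio_near_one : Rabs ((1 - psum q k) / Pi k - 1) <= 32 * u.
Proof.
  pose proof eps_bounds as [He0 [_ [_ [Heu _]]]].
  pose proof (poi_tail_range lam Hlam k) as HPi.
  pose proof (q_psum_range k).
  set (x := (1 - psum q k) / Pi k).
  assert (Hx0 : 0 <= x) by (apply Rdiv_nonneg; lra).
  assert (Hx : Rabs (x - h k) <= eps * x + 3 * eps).
  { unfold x. replace ((1 - psum q k) / Pi k - h k) with (((1 - psum q k) - Pi k * h k) / Pi k)
      by (field; lra).
    apply Rabs_div_le; [lra|].
    replace ((eps * ((1 - psum q k) / Pi k) + 3 * eps) * Pi k)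
      with (eps * (1 - psum q k) + 3 * eps * Pi k) by (field; lra).
    apply tail_vs_ratio_at_k. }
  pose proof ratio_at_k as Hh. apply Rabs_le_inv in Hx. apply Rabs_le_inv in Hh.
  assert (x <= 3) by nra.
  assert (eps * x <= 3 * eps) by nra.
  apply Rabs_le. lra.
Qed.

End Comparison.

Lemma stein_tail_comparison k : lam <= INR k ->
  (d1 + d2 * lam) * (1 + (INR k - lam) ^ 2 / lam) <= 1 / 44 ->
  Rabs ((1 - psum q k) / Pi k - 1)
  <= 32 * ((d1 + d2 * lam) * (1 + (INR k - lam) ^ 2 / lam)).
Proof.
  intros Hk Hu. destruct (nat_ceiling lam Hlam) as [j Hj].
  assert (Hjk : (j < k)%nat) by (apply INR_lt; lra).
  destruct (finite_argmax h (pred j) (k - pred j)) as [i [Hi Hmax]].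
  apply (tail_ratio_near_one k j (h i)); try assumption.
  - intros i' Hi'. apply Hmax. lia.
  - exists i. split; [lia | reflexivity].
Qed.

End Stein.

(* Since W^s - W lies in {0, 1, 2}, each row and column of p has at most
   three nonzero entries; the size-bias identity applied to indicators gives
   n P(W = n) = lam P(W^s = n). *)
Section Coupling.

Variables (p : nat -> nat -> R) (pW pWs : nat -> R) (lam d1 d2 : R).
Hypothesis Hp : forall n m, 0 <= p n m.
Hypothesis HpW : forall n, infinite_sum (fun m => p n m) (pW n).
Hypothesis HpWs : forall m, infinite_sum (fun n => p n m) (pWs m).
Hypothesis Hsupp : forall n m, p n m <> 0 -> (m = n \/ m = S n \/ m = S (S n)).
Hypothesis Hsb : size_biased pW pWs lam.
Hypothesis Hd1 : 0 <= d1.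
Hypothesis Hd1_cond : forall n, p n (S (S n)) <= d1 * pW n.
Hypothesis Hd2_cond : forall n, p n n <= d2 * INR n * pW n.

Lemma off_support n m : m <> n -> m <> S n -> m <> S (S n) -> p n m = 0.
Proof.
  intros. destruct (Req_dec (p n m) 0) as [|Hne]; [assumption|].
  destruct (Hsupp n m Hne) as [|[|]]; contradiction.
Qed.

Lemma row_decomp n : pW n = p n n + p n (S n) + p n (S (S n)).
Proof.
  assert (Hs : infinite_sum (fun m => p n m) (psum (fun m => p n m) (S (S (S n)))))
    by (apply series_finite; intros m Hm; apply off_support; lia).
  rewrite (uniqueness_sum _ _ _ (HpW n) Hs), !psum_S, psum_zero
    by (intros i Hi; apply off_support; lia).
  ring.
Qed.

Lemma column_decomp m :
  pWs (S m) = p (S m) (S m) + p m (S m) + match m with O => 0 | S m' => p m' (S m) end.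
Proof.
  assert (Hs : infinite_sum (fun n => p n (S m)) (psum (fun n => p n (S m)) (S (S m))))
    by (apply series_finite; intros n Hn; apply off_support; lia).
  rewrite (uniqueness_sum _ _ _ (HpWs (S m)) Hs).
  destruct m as [|m]; [simpl; ring|].
  rewrite !psum_S, psum_zero by (intros i Hi; apply off_support; lia). ring.
Qed.

Lemma pW_nonneg n : 0 <= pW n.
Proof.
  rewrite row_decomp. pose proof (Hp n n). pose proof (Hp n (S n)).
  pose proof (Hp n (S (S n))). lra.
Qed.

(* Testing the size-bias identity against the indicator of {m}. *)
Lemma size_bias_point m : INR m * pW m = lam * pWs m.
Proof.
  set (ind := fun n => if Nat.eq_dec n m then 1 else 0).
  assert (Hfin : forall f : nat -> R, infinite_sum (fun n => f n * ind n) (f m)).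
  { intros f. replace (f m) with (psum (fun n => f n * ind n) (S m)).
    - apply series_finite. intros n Hn. unfold ind.
      destruct (Nat.eq_dec n m); [lia | ring].
    - rewrite psum_S, psum_zero.
      + unfold ind. destruct (Nat.eq_dec m m); [ring | lia].
      + intros i Hi. unfold ind. destruct (Nat.eq_dec i m); [lia | ring]. }
  assert (Habs : forall x n, Rabs (x * ind n) = Rabs x * ind n).
  { intros x n. unfold ind. rewrite Rabs_mult.
    destruct (Nat.eq_dec n m); [rewrite Rabs_R1 | rewrite Rabs_R0]; reflexivity. }
  apply (Hsb ind).
  - exists (Rabs (INR m * pW m)).
    apply (infinite_sum_ext _ (fun n => Rabs (INR n * pW n) * ind n)); [|apply Hfin].
    intros n. rewrite <- Habs. f_equal. ring.
  - exists (Rabs (pWs m)).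
    apply (infinite_sum_ext _ (fun n => Rabs (pWs n) * ind n)); [|apply Hfin].
    intros n. rewrite <- Habs. f_equal. ring.
  - apply (infinite_sum_ext _ (fun n => INR n * pW n * ind n)); [intros; ring | apply Hfin].
  - apply (infinite_sum_ext _ (fun n => pWs n * ind n)); [intros; ring | apply Hfin].
Qed.

(* The Stein defect: P(W = n, Delta = 1) - P(W = n - 1, Delta = -1). *)
Definition coupling_defect (n : nat) : R :=
  match n with O => p O O | S n' => p (S n') (S n') - p n' (S (S n')) end.

Lemma coupling_stein m :
  INR (S m) * pW (S m) = lam * (pW m + coupling_defect (S m) - coupling_defect m).
Proof.
  rewrite size_bias_point, column_decomp, (row_decomp m). f_equal.
  destruct m; simpl; ring.
Qed.

Lemma coupling_defect_up n : coupling_defect n <= d2 * INR n * pW n.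
Proof.
  destruct n as [|n]; simpl coupling_defect; [apply Hd2_cond|].
  pose proof (Hd2_cond (S n)). pose proof (Hp n (S (S n))). lra.
Qed.

Lemma coupling_defect_low n : - (d1 * pW (pred n)) <= coupling_defect n.
Proof.
  destruct n as [|n]; simpl coupling_defect; simpl pred.
  - pose proof (Hp 0 0)%nat. pose proof (pW_nonneg 0). nra.
  - pose proof (Hd1_cond n). pose proof (Hp (S n) (S n)). lra.
Qed.

Lemma coupling_defect_0 : coupling_defect 0 = 0.
Proof. simpl. pose proof (Hd2_cond 0) as H0. pose proof (Hp 0 0)%nat. simpl in H0. lra. Qed.

Lemma coupling_defect_le n : coupling_defect n <= pW n.
Proof.
  rewrite row_decomp. destruct n as [|n]; simpl coupling_defect.
  - pose proof (Hp 0 1)%nat. pose proof (Hp 0 2)%nat. lra.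
  - pose proof (Hp (S n) (S (S n))). pose proof (Hp (S n) (S (S (S n)))).
    pose proof (Hp n (S (S n))). lra.
Qed.

End Coupling.

Theorem theorem2p3 :
  exists c C : R, 0 < c /\ 0 < C /\
  forall (p : nat -> nat -> R) (pW pWs : nat -> R) (lam d1 d2 : R),
    (forall n m, 0 <= p n m) ->
    (forall n, infinite_sum (fun m => p n m) (pW n)) ->
    (forall m, infinite_sum (fun n => p n m) (pWs m)) ->
    infinite_sum pW 1 ->
    0 < lam ->
    infinite_sum (fun n => INR n * pW n) lam ->
    size_biased pW pWs lam ->
    (* Delta = W + 1 - W^s lies in {-1,0,1} a.s. *)
    (forall n m, p n m <> 0 -> (m = n \/ m = S n \/ m = S (S n))) ->
    0 <= d1 -> 0 <= d2 ->
    (* P(Delta = -1 | W) <= d1  a.s. *)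
    (forall n, p n (S (S n)) <= d1 * pW n) ->
    (* P(Delta = 1 | W) <= d2 W  a.s. *)
    (forall n, p n n <= d2 * INR n * pW n) ->
    forall k : nat, lam <= INR k ->
    let xi := (INR k - lam) / sqrt lam in
    (d1 + d2 * lam) * (1 + xi ^ 2) <= c ->
    Rabs (pmf_tail pW k / poi_tail lam k - 1) <= C * (d1 + d2 * lam) * (1 + xi ^ 2).
Proof.
  exists (1 / 44), 32. split; [lra|]. split; [lra|].
  intros p pW pWs lam d1 d2 Hp HpW HpWs Hsum Hlam Hmean Hsb Hsupp Hd1 Hd2 Hd1_cond Hd2_cond
    k Hk xi Hc.
  subst xi. rewrite sq_div_sqrt in * by assumption.
  unfold pmf_tail. rewrite Rmult_assoc.
  apply (stein_tail_comparison pW (coupling_defect p) lam d1 d2); try assumption.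
  - intros n. eapply pW_nonneg; eassumption.
  - intros m. eapply coupling_stein; eassumption.
  - intros n. eapply coupling_defect_up; eassumption.
  - intros n. eapply coupling_defect_low; eassumption.
  - eapply coupling_defect_0; eassumption.
  - intros n. eapply coupling_defect_le; eassumption.
Qed.
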